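(* Let $\mathfrak g$ be a real almost abelian Lie algebra (i.e. $\mathfrak g$ has an abelian ideal of codimension one) and let $(J,\langle\cdot,\cdot\rangle)$ be a Hermitian structure on $\mathfrak g$. Then there exist a $J$-invariant abelian ideal $\mathfrak a$ of $\mathfrak g$ of codimension $2$, an orthonormal basis $\{f_1,f_2\}$ of $\mathfrak a^{\perp}$, a vector $v_0\in\mathfrak a$ and a number $\mu\in\mathbb R$ such that $[f_1,f_2]=\mu f_2+v_0$, the endomorphism $\operatorname{ad}_{f_1}|_{\mathfrak a}$ of $\mathfrak a$ commutes with $J|_{\mathfrak a}$, and $\operatorname{ad}_{f_2}|_{\mathfrak a}=0$.
   Context: A complex structure on a real Lie algebra $\mathfrak g$ is an endomorphism $J$ with $J^2=-\mathrm{Id}$ and vanishing Nijenhuis tensor $N_J(x,y)=[Jx,Jy]-[x,y]-J([Jx,y]+[x,Jy])$ for all $x,y\in\mathfrak g$. A Hermitian structure $(J,\langle\cdot,\cdot\rangle)$ consists of a complex structure $J$ and an inner product with $\langle Jx,Jy\rangle=\langle x,y\rangle$. *)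

(* A real Lie algebra of dimension n is modelled on the
   row-vector space 'rV[R]_n (R : realType) with a bracket [br]; linear
   endomorphisms are matrices acting on the right (x *m J); subspaces are
   matrices viewed through their row space (mxalgebra, %MS); an inner
   product is given by a symmetric positive definite Gram matrix. *)
From HB Require Import structures.
From mathcomp Require Import all_boot all_order all_algebra.
From mathcomp Require Import reals.
Set Implicit Arguments. Unset Strict Implicit. Unset Printing Implicit Defensive.
Import Order.TTheory GRing.Theory Num.Theory.
Local Open Scope ring_scope.

Section LieDefs.
Variables (R : realType) (n : nat).
Notation V := 'rV[R]_n.

(* Lie bracket: bilinear (left linear + alternating gives right linear),
   alternating, Jacobi identity. *)
Definition is_lie_bracket (br : V -> V -> V) : Prop :=
  [/\ (forall (a : R) (x y z : V), br (a *: x + y) z = a *: br x z + br y z),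
      (forall x : V, br x x = 0) &
      (forall x y z : V, br x (br y z) + br y (br z x) + br z (br x y) = 0)].

Definition is_ideal (br : V -> V -> V) (A : 'M[R]_n) : Prop :=
  forall x y : V, (y <= A)%MS -> (br x y <= A)%MS.

Definition is_abelian_sub (br : V -> V -> V) (A : 'M[R]_n) : Prop :=
  forall x y : V, (x <= A)%MS -> (y <= A)%MS -> br x y = 0.

Definition almost_abelian (br : V -> V -> V) : Prop :=
  exists A : 'M[R]_n, [/\ is_ideal br A, is_abelian_sub br A & (\rank A).+1 = n].

Definition nijenhuis (br : V -> V -> V) (J : 'M[R]_n) (x y : V) : V :=
  br (x *m J) (y *m J) - br x y - (br (x *m J) y + br x (y *m J)) *m J.

Definition complex_structure (br : V -> V -> V) (J : 'M[R]_n) : Prop :=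
  J *m J = - 1%:M /\ forall x y : V, nijenhuis br J x y = 0.

Definition ip (G : 'M[R]_n) (u v : V) : R := (u *m G *m v^T) 0 0.

Definition inner_product (G : 'M[R]_n) : Prop :=
  G^T = G /\ forall v : V, v != 0 -> 0 < ip G v v.

Definition hermitian_structure (br : V -> V -> V) (J G : 'M[R]_n) : Prop :=
  [/\ complex_structure br J, inner_product G &
      forall x y : V, ip G (x *m J) (y *m J) = ip G x y].

End LieDefs.

(* Let U be the abelian ideal of codimension one. U is not J-invariant: J would
   induce on the line g/U a real endomorphism squaring to -1. Hence
   a = U ∩ UJ is a J-invariant subspace of codimension two. Take f2 a unit
   vector of U orthogonal to a, and f1 = f2 J. Since f1 J = -f2 lies in the
   abelian ideal U, the vanishing of the Nijenhuis tensor on (f1, v), v ∈ a,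
   reduces to [f1, vJ] = [f1, v] J; so ad f1 commutes with J on a and maps a
   into U ∩ UJ = a, which makes a an ideal. Finally [f1, f2] ∈ U = a ⊕ R f2,
   and ad f2 vanishes on a because U is abelian. *)

From HB Require Import structures.
From mathcomp Require Import all_boot all_order all_algebra.
From mathcomp Require Import reals.
From mathcomp Require Import lra zify.
Set Implicit Arguments. Unset Strict Implicit. Unset Printing Implicit Defensive.
Import Order.TTheory GRing.Theory Num.Theory.
Local Open Scope ring_scope.

Section Codim1.
Variables (F : fieldType) (n : nat).

Lemma mxrank_addsmx_lt p q (A : 'M[F]_(p, n)) (B : 'M[F]_(q, n)) :
  ~~ (B <= A)%MS -> (\rank A < \rank (A + B))%N.
Proof. by move=> BA; apply: rank_ltmx; rewrite ltmxE addsmxSl addsmx_sub submx_refl. Qed.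

Lemma sub_addsmx_codim1 p q (A : 'M[F]_(p, n)) (U : 'M[F]_(q, n)) (v : 'rV[F]_n) :
  (A <= U)%MS -> (\rank A).+1 = \rank U -> (v <= U)%MS -> ~~ (v <= A)%MS ->
  (U <= A + v)%MS.
Proof.
move=> AU rkA vU vA.
have AvU : (A + v <= U)%MS by rewrite addsmx_sub AU vU.
have rk_lt := mxrank_addsmx_lt vA.
have rk_le := mxrankS AvU.
have rk_eq : \rank (A + v)%MS == \rank U by rewrite eqn_leq rk_le; lia.
by move: rk_eq; rewrite (mxrank_leqif_eq AvU) => /andP[].
Qed.

Lemma sub_addsmx_rowP p (A : 'M[F]_(p, n)) (v x : 'rV[F]_n) :
  (x <= A + v)%MS -> exists c u, (u <= A)%MS /\ x = c *: v + u.
Proof.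
case/sub_addsmxP => -[D1 D2] /= ->.
exists (D2 0 0), (D1 *m A); split; first exact: submxMl.
by rewrite {1}[D2]mx11_scalar mul_scalar_mx addrC.
Qed.

End Codim1.

Section ComplexStructure.
Variables (F : fieldType) (n : nat) (J : 'M[F]_n).
Hypothesis JJ : J *m J = - 1%:M.

Lemma mulmxJJ m (x : 'M[F]_(m, n)) : x *m J *m J = - x.
Proof. by rewrite -mulmxA JJ mulmxN mulmx1. Qed.

Lemma sub_mulmxJ m p (x : 'M[F]_(m, n)) (U : 'M[F]_(p, n)) :
  (x <= U *m J)%MS = (x *m J <= U)%MS.
Proof.
apply/idP/idP => [/submxP[D ->] | xJU].
  by rewrite -mulmxA mulmxJJ mulmxN eqmx_opp submxMl.
by rewrite -[x]opprK -(mulmxJJ x) eqmx_opp submxMr.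
Qed.

Lemma mxrank_mulmxJ p (U : 'M[F]_(p, n)) : \rank (U *m J) = \rank U.
Proof.
apply: mxrankMfree; rewrite row_free_unit.
have JNJ : J *m (- J) = 1%:M by rewrite mulmxN JJ opprK.
by case: (mulmx1_unit JNJ).
Qed.

Lemma capmx_mulJ_stable p (U : 'M[F]_(p, n)) :
  ((U :&: U *m J) *m J <= U :&: U *m J)%MS.
Proof. by rewrite sub_capmx -sub_mulmxJ capmxSr submxMr ?capmxSl. Qed.

End ComplexStructure.

Section RealComplexStructure.
Variables (R : realFieldType) (n : nat) (J : 'M[R]_n).
Hypothesis JJ : J *m J = - 1%:M.

Lemma codim1_not_mulJ_stable p (U : 'M[R]_(p, n)) :
  (\rank U).+1 = n -> ~~ (U *m J <= U)%MS.
Proof.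
move=> rkU; apply/negP => UJ.
have /row_subPn[i xU] : ~~ (1%:M <= U)%MS by rewrite sub1mx /row_full; lia.
set x := row i 1%:M in xU.
have /sub_addsmx_rowP[c [u [uU xJ]]] : (x *m J <= U + x)%MS.
  by apply: submx_full; rewrite -sub1mx sub_addsmx_codim1 ?submx1 ?mxrank1.
have c21 : c ^+ 2 + 1 != 0 by rewrite lt0r_neq0 // ltr_wpDl ?sqr_ge0.
have xE : (c ^+ 2 + 1) *: x = - (c *: u + u *m J).
  have xJJ : - x = c ^+ 2 *: x + (c *: u + u *m J).
    by rewrite -(mulmxJJ JJ x) xJ mulmxDl -scalemxAl xJ scalerDr scalerA -expr2 addrA.
  have -> : c *: u + u *m J = - x - c ^+ 2 *: x by rewrite xJJ addrAC subrr add0r.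
  by rewrite opprB opprK scalerDl scale1r.
apply/negP: xU; rewrite -[x](scalerK c21) xE scalemx_sub // eqmx_opp.
by rewrite addmx_sub ?scalemx_sub // (submx_trans _ UJ) ?submxMr.
Qed.

Lemma mxrank_capmx_mulJ p (U : 'M[R]_(p, n)) :
  (\rank U).+1 = n -> (\rank (U :&: U *m J) + 2)%N = n.
Proof.
move=> rkU; have UJU := codim1_not_mulJ_stable rkU.
have rk_lt := mxrank_addsmx_lt UJU.
have := rank_leq_col (U + U *m J)%MS; have := mxrank_sum_cap U (U *m J).
rewrite mxrank_mulmxJ //; lia.
Qed.

End RealComplexStructure.

Section InnerProduct.
Variables (R : realType) (n : nat) (G : 'M[R]_n).
Implicit Types (u v : 'rV[R]_n).

Lemma ipZl a u v : ip G (a *: u) v = a * ip G u v.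
Proof. by rewrite /ip -!scalemxAl mxE. Qed.

Lemma ipZr a u v : ip G u (a *: v) = a * ip G u v.
Proof. by rewrite /ip linearZ /= -scalemxAr mxE. Qed.

Lemma ipNr u v : ip G u (- v) = - ip G u v.
Proof. by rewrite /ip linearN /= mulmxN mxE. Qed.

Lemma ip_sym u v : G^T = G -> ip G u v = ip G v u.
Proof.
move=> Gsym; have tr_uGv : (u *m G *m v^T)^T = v *m G *m u^T.
  by rewrite !trmx_mul trmxK Gsym mulmxA.
by rewrite /ip -tr_uGv [RHS]mxE.
Qed.

Lemma ip_kermx p (A : 'M[R]_(p, n)) f v :
  (f <= kermx (G *m A^T))%MS -> (v <= A)%MS -> ip G f v = 0.
Proof.
rewrite sub_kermx => /eqP fGA /submxP[D ->].
by rewrite /ip trmx_mul !mulmxA -(mulmxA f) fGA !mul0mx mxE.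
Qed.

Lemma exists_orthogonal_unit p q (A : 'M[R]_(p, n)) (U : 'M[R]_(q, n)) :
  inner_product G -> (\rank A < \rank U)%N ->
  exists f : 'rV[R]_n,
    [/\ ip G f f = 1, (f <= U)%MS & forall v : 'rV[R]_n, (v <= A)%MS -> ip G f v = 0].
Proof.
move=> [_ Gpos] rkAU; set K := kermx (G *m A^T).
have rk_cap : (0 < \rank (U :&: K))%N.
  have := mxrank_sum_cap U K; have := rank_leq_col (U + K)%MS.
  have rGA : (\rank (G *m A^T) <= \rank A)%N by rewrite -(mxrank_tr A) mxrankM_maxr.
  by have := rank_leq_col U; rewrite mxrank_ker; lia.
set f := nz_row (U :&: K)%MS.
have f0 : f != 0 by rewrite nz_row_eq0 -mxrank_eq0 -lt0n.
have fU : (f <= U)%MS := submx_trans (nz_row_sub _) (capmxSl _ _).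
have fK : (f <= K)%MS := submx_trans (nz_row_sub _) (capmxSr _ _).
have ff_gt0 := Gpos f f0; set s := Num.sqrt (ip G f f).
exists (s^-1 *: f); split; [|exact: scalemx_sub|].
  by rewrite ipZl ipZr mulrA -expr2 exprVn sqr_sqrtr ?ltW ?mulVf ?gt_eqF.
by move=> v vA; rewrite ipZl (ip_kermx fK vA) mulr0.
Qed.

End InnerProduct.

Section HermitianStructure.
Variables (R : realType) (n : nat) (J G : 'M[R]_n).
Hypotheses (JJ : J *m J = - 1%:M) (Gsym : G^T = G).
Hypothesis JG : forall x y : 'rV[R]_n, ip G (x *m J) (y *m J) = ip G x y.

Lemma ip_mulJr (x y : 'rV[R]_n) : ip G x (y *m J) = - ip G (x *m J) y.
Proof. by rewrite -JG mulmxJJ // ipNr. Qed.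

Lemma ip_mulJ_self (x : 'rV[R]_n) : ip G (x *m J) x = 0.
Proof.
have : ip G (x *m J) x = - ip G (x *m J) x by rewrite {1}ip_sym // ip_mulJr.
lra.
Qed.

Lemma orthonormal_mulJ p (A : 'M[R]_(p, n)) (f : 'rV[R]_n) :
  (A *m J <= A)%MS -> ip G f f = 1 -> (forall v : 'rV[R]_n, (v <= A)%MS -> ip G f v = 0) ->
  [/\ ip G (f *m J) (f *m J) = 1, ip G f f = 1, ip G (f *m J) f = 0 &
      forall v : 'rV[R]_n, (v <= A)%MS -> ip G v (f *m J) = 0 /\ ip G v f = 0].
Proof.
move=> AJ ff fA; split; rewrite ?JG ?ip_mulJ_self // => v vA.
rewrite ip_mulJr !(ip_sym _ f) // !fA ?oppr0 //.
exact: submx_trans (submxMr J vA) AJ.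
Qed.

End HermitianStructure.

Section AlmostAbelian.
Variables (R : realType) (n : nat) (br : 'rV[R]_n -> 'rV[R]_n -> 'rV[R]_n).

Lemma nijenhuis_abelian_mulJr J (U : 'M[R]_n) (x y : 'rV[R]_n) :
  complex_structure br J -> is_abelian_sub br U ->
  (x *m J <= U)%MS -> (y <= U)%MS -> (y *m J <= U)%MS ->
  br x (y *m J) = br x y *m J.
Proof.
move=> [JJ N0] Uab xJU yU yJU; have := N0 x y.
rewrite /nijenhuis (Uab (x *m J) (y *m J)) // (Uab (x *m J) y) //.
rewrite sub0r add0r => /eqP; rewrite -opprD oppr_eq0 addr_eq0.
by move=> /eqP ->; rewrite mulNmx mulmxJJ // opprK.
Qed.

Lemma ideal_codim1 (U A : 'M[R]_n) (f : 'rV[R]_n) :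
  is_lie_bracket br -> is_abelian_sub br U -> row_full (U + f)%MS -> (A <= U)%MS ->
  (forall y : 'rV[R]_n, (y <= A)%MS -> (br f y <= A)%MS) -> is_ideal br A.
Proof.
move=> [brDl _ _] Uab Uf_full AU adfA x y yA.
have /sub_addsmx_rowP[c [u [uU ->]]] := submx_full x Uf_full.
by rewrite brDl (Uab u y) ?(submx_trans yA) // addr0 scalemx_sub ?adfA.
Qed.

End AlmostAbelian.

Section JInvariantPart.
Variables (R : realType) (n : nat) (br : 'rV[R]_n -> 'rV[R]_n -> 'rV[R]_n).
Variables (J U : 'M[R]_n) (x : 'rV[R]_n).
Hypotheses (Jcs : complex_structure br J) (Uideal : is_ideal br U).
Hypotheses (Uab : is_abelian_sub br U) (xJU : (x *m J <= U)%MS).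

Lemma ad_mulJr_capmx (v : 'rV[R]_n) : (v <= U :&: U *m J)%MS -> br x (v *m J) = br x v *m J.
Proof.
move=> va; have JJ := proj1 Jcs.
apply: nijenhuis_abelian_mulJr Jcs Uab xJU _ _; first exact: submx_trans va (capmxSl _ _).
by rewrite -sub_mulmxJ //; apply: submx_trans va (capmxSr _ _).
Qed.

Lemma ad_sub_capmx (v : 'rV[R]_n) : (v <= U :&: U *m J)%MS -> (br x v <= U :&: U *m J)%MS.
Proof.
move=> va; have JJ := proj1 Jcs.
have vJU : (v *m J <= U)%MS by rewrite -sub_mulmxJ //; apply: submx_trans va (capmxSr _ _).
by rewrite sub_capmx sub_mulmxJ // -ad_mulJr_capmx // !Uideal // (submx_trans va) ?capmxSl.
Qed.

End JInvariantPart.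

Theorem lemma3p1 (R : realType) (n : nat) (br : 'rV[R]_n -> 'rV[R]_n -> 'rV[R]_n)
    (J G : 'M[R]_n) :
  is_lie_bracket br -> almost_abelian br -> hermitian_structure br J G ->
  exists a : 'M[R]_n,
    [/\ is_ideal br a, is_abelian_sub br a, (a *m J <= a)%MS & (\rank a + 2)%N = n] /\
    exists (f1 f2 : 'rV[R]_n),
      [/\ ip G f1 f1 = 1, ip G f2 f2 = 1, ip G f1 f2 = 0 &
          forall v : 'rV[R]_n, (v <= a)%MS -> ip G v f1 = 0 /\ ip G v f2 = 0] /\
      exists (v0 : 'rV[R]_n) (mu : R),
        [/\ (v0 <= a)%MS, br f1 f2 = mu *: f2 + v0,
            (forall v : 'rV[R]_n, (v <= a)%MS -> br f1 (v *m J) = br f1 v *m J) &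
            (forall v : 'rV[R]_n, (v <= a)%MS -> br f2 v = 0)].
Proof.
move=> lie [U [Uideal Uab rkU]] [Jcs Gip JG]; have [JJ _] := Jcs; have [Gsym _] := Gip.
set a := (U :&: U *m J)%MS.
have rka : (\rank a + 2)%N = n := mxrank_capmx_mulJ JJ rkU.
have aU : (a <= U)%MS := capmxSl _ _.
have aJ : (a *m J <= a)%MS := capmx_mulJ_stable JJ U.
have rk_aU : (\rank a < \rank U)%N by lia.
have [f2 [f2n f2U f2_orth]] := exists_orthogonal_unit Gip rk_aU.
have f2_notin_a : ~~ (f2 <= a)%MS.
  by apply/negP => /f2_orth; rewrite f2n => /eqP; rewrite oner_eq0.
set f1 := f2 *m J.
have f1J : (f1 *m J <= U)%MS by rewrite mulmxJJ // eqmx_opp.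
have f1_notin_U : ~~ (f1 <= U)%MS.
  by apply: contra f2_notin_a => f1U; rewrite sub_capmx f2U sub_mulmxJ.
exists a; split; first split=> //.
- apply: ideal_codim1 lie Uab _ aU (ad_sub_capmx Jcs Uideal Uab f1J).
  by rewrite -sub1mx sub_addsmx_codim1 ?submx1 ?mxrank1.
- by move=> x y xa ya; apply: Uab; apply: submx_trans aU.
exists f1, f2; split; first exact: orthonormal_mulJ.
have Ua : (U <= a + f2)%MS by apply: sub_addsmx_codim1 aU _ f2U f2_notin_a; lia.
have [mu [v0 [v0a br12]]] := sub_addsmx_rowP (submx_trans (Uideal f1 f2 f2U) Ua).
exists v0, mu; split=> // [v va | v va].
  exact (ad_mulJr_capmx Jcs Uab f1J va).
exact: Uab f2U (submx_trans va aU).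
Qed.
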